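(* For any nonempty configuration and any integer shift $G$, the inter-level sampler (Algorithm 1) terminates with probability $1$ and returns level $\ell$ with probability exactly $W_\ell/\sum_j W_j$.
   Context: Fix an integer $b\ge 2$. There is a set $\mathcal L$ of $N$ levels, which are consecutive integers. Each level $\ell$ holds a finite (possibly empty) multiset of normalized significands, each an integer in $[2^{b-1},2^b)$. Let $z$ be the total number of stored significands over all levels; assume $z<2^b$. For each level, $SS_\ell$ is the sum of its significands (so $SS_\ell=0$ iff the level is empty); set $SS_\ell=0$ for integers $\ell\notin\mathcal L$. The level weight is $W_\ell=SS_\ell2^\ell$. For an integer global shift $G$, $A_\ell(G)=\lfloor W_\ell2^G\rfloor+1$ if $SS_\ell>0$ and $A_\ell(G)=0$ if $SS_\ell=0$; $A(G)=\sum_\ell A_\ell(G)$ and $M(G)=\sum_\ell W_\ell2^G$. The configuration is nonempty if $z\ge1$. Inter-level sampler (Algorithm 1), with shift $G$ and $A=A(G)$: it performs independent outer iterations. In an outer iteration, draw $x$ uniformly from $\{1,\dots,A\}$ and scan the levels in decreasing order starting from the largest nonempty level. At the current level $\ell$: if $x<A_\ell(G)$, return $\ell$; if $x=A_\ell(G)$, run the refinement loop for $m=1,2,\dots$: draw $r$ uniformly from $\{0,\dots,2^b-1\}$ independently, let $t=\lfloor SS_\ell 2^{\ell+G+mb}\rfloor \bmod 2^b$; if $r<t$ return $\ell$; else if $r>t$ or $\ell+G+mb\ge 0$, abandon this outer iteration and start a new one; otherwise continue with $m+1$. If $x>A_\ell(G)$, set $x\leftarrow x-A_\ell(G)$ and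 move to the next lower level. *)

From Stdlib Require Import ZArith Reals List Bool.
Import ListNotations.
Open Scope Z_scope.

(* A configuration: the levels are the consecutive integers
   lo, lo+1, ..., lo+N-1 with N = length lv; level (lo+i) holds the
   multiset (list) of significands  nth i lv. *)
Record config := mkConfig { lo : Z ; lv : list (list Z) }.

Definition Nlev (c : config) : nat := length (lv c).

Definition in_levels (c : config) (l : Z) : bool :=
  (lo c <=? l) && (l <? lo c + Z.of_nat (Nlev c)).

Definition SS (c : config) (l : Z) : Z :=
  if in_levels c l then fold_right Z.add 0 (nth (Z.to_nat (l - lo c)) (lv c) nil)
  else 0.

Definition zcount (c : config) : nat := fold_right plus 0%nat (map (@length Z) (lv c)).

Definition normalized (b : nat) (c : config) : Prop :=
  Forall (Forall (fun s => 2 ^ (Z.of_nat b - 1) <= s < 2 ^ Z.of_nat b)) (lv c).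

Definition floor_pow2 (s e : Z) : Z :=
  if 0 <=? e then s * 2 ^ e else s / 2 ^ (- e).

(* A_l(G) = floor(W_l 2^G) + 1 if SS_l > 0, else 0;  W_l 2^G = SS_l 2^(l+G) *)
Definition Al (G : Z) (c : config) (l : Z) : Z :=
  if 0 <? SS c l then floor_pow2 (SS c l) (l + G) + 1 else 0.

Definition Atot (G : Z) (c : config) : Z :=
  fold_right Z.add 0 (map (fun i => Al G c (lo c + Z.of_nat i)) (seq 0 (Nlev c))).

Definition top (c : config) : Z :=
  lo c + Z.of_nat (last (filter (fun i => 0 <? SS c (lo c + Z.of_nat i)) (seq 0 (Nlev c))) 0%nat).

Definition W (c : config) (l : Z) : R := (IZR (SS c l) * powerRZ 2 l)%R.

Definition sumW (c : config) : R :=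
  fold_right Rplus 0%R (map (fun i => W c (lo c + Z.of_nat i)) (seq 0 (Nlev c))).

Inductive state :=
  | Outer
  | Scan (x l : Z)
  | Refine (l m : Z)
  | Done (l : Z).

(* one step: the list of successor states, chosen uniformly at random
   (a singleton list is a deterministic step) *)
Definition step (b : nat) (G : Z) (c : config) (s : state) : list state :=
  match s with
  | Outer =>
      map (fun k => Scan (Z.of_nat k + 1) (top c)) (seq 0 (Z.to_nat (Atot G c)))
  | Scan x l =>
      if l <? lo c then [Outer]  (* ran below the lowest level: unreachable *)
      else let a := Al G c l in
           if x <? a then [Done l]
           else if x =? a then [Refine l 1]
           else [Scan (x - a) (l - 1)]
  | Refine l m =>
      let e := l + G + m * Z.of_nat b in
      let t := floor_pow2 (SS c l) e mod 2 ^ Z.of_nat b in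
      map (fun k => let r := Z.of_nat k in
                    if r <? t then Done l
                    else if (t <? r) || (0 <=? e) then Outer
                    else Refine l (m + 1))
          (seq 0 (Z.to_nat (2 ^ Z.of_nat b)))
  | Done l => [Done l]
  end.

Definition is_done (s : state) : bool :=
  match s with Done _ => true | _ => false end.

Definition done_at (l0 : Z) (s : state) : bool :=
  match s with Done l => Z.eqb l l0 | _ => false end.

Definition avg (f : state -> R) (xs : list state) : R :=
  match xs with
  | nil => 0%R
  | _ => (fold_right Rplus 0%R (map f xs) / INR (length xs))%R
  end.

(* probability that, started in state s, the algorithm has returned
   (reached a Done state) satisfying goal within n steps *)
Fixpoint reach (b : nat) (G : Z) (c : config) (goal : state -> bool)
    (n : nat) (s : state) : R :=
  if is_done s then (if goal s then 1%R else 0%R)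
  else match n with
       | O => 0%R
       | S n' => avg (reach b G c goal n') (step b G c s)
       end.

From Stdlib Require Import ZArith Reals List Lra Lia.
Import ListNotations.
Open Scope R_scope.

(* During a scan, level l receives A_l of the draws: the A_l - 1 smaller ones return l at once,
   and for x = A_l the refinement loop compares the fractional part of W_l 2^G, b bits at a time,
   with fresh uniform bits, so it returns l with probability exactly that fractional part and
   restarts otherwise. Hence one outer iteration returns l with probability W_l 2^G / A and
   restarts with probability 1 - M/A, where M = sum_j W_j 2^G. If Q is the part of M carried by
   the levels counted as success, the success probability p solves p = Q/A + (1 - M/A) p, so
   p = Q/M; since an outer iteration is resolved within a bounded number of steps, the n-step
   probabilities converge to it geometrically. *)

Definition rsum {A} (f : A -> R) (l : list A) : R := fold_right Rplus 0 (map f l).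

Lemma rsum_app {A} (f : A -> R) l1 l2 : rsum f (l1 ++ l2) = rsum f l1 + rsum f l2.
Proof. unfold rsum; induction l1; simpl; [lra | rewrite IHl1; lra]. Qed.

Lemma rsum_map {A B} (h : A -> B) f l : rsum f (map h l) = rsum (fun a => f (h a)) l.
Proof. unfold rsum; rewrite map_map; reflexivity. Qed.

Lemma rsum_ext {A} (f g : A -> R) l :
  (forall a, In a l -> f a = g a) -> rsum f l = rsum g l.
Proof. intros H; unfold rsum; rewrite (map_ext_in f g l H); reflexivity. Qed.

Lemma rsum_le {A} (f g : A -> R) l :
  (forall a, In a l -> f a <= g a) -> rsum f l <= rsum g l.
Proof.
  unfold rsum; induction l as [|a l IH]; simpl; intros H; [lra|].
  specialize (IH (fun x h => H x (or_intror h))); specialize (H a (or_introl eq_refl)); lra.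
Qed.

Lemma rsum_const {A} (f : A -> R) l k :
  (forall a, In a l -> f a = k) -> rsum f l = INR (length l) * k.
Proof.
  unfold rsum; induction l as [|a l IH]; simpl; intros H; [lra|].
  rewrite IH, (H a (or_introl eq_refl)) by auto.
  destruct (length l); simpl; lra.
Qed.

Lemma rsum_nonneg {A} (f : A -> R) l : (forall a, In a l -> 0 <= f a) -> 0 <= rsum f l.
Proof.
  intros H; rewrite <- (Rmult_0_r (INR (length l))), <- (rsum_const (fun _ => 0) l 0) by auto.
  now apply rsum_le.
Qed.

Lemma rsum_plus {A} (f g : A -> R) l : rsum (fun a => f a + g a) l = rsum f l + rsum g l.
Proof. unfold rsum; induction l; simpl; [lra | rewrite IHl; lra]. Qed.

Lemma rsum_minus {A} (f g : A -> R) l : rsum (fun a => f a - g a) l = rsum f l - rsum g l.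
Proof. unfold rsum; induction l; simpl; [lra | rewrite IHl; lra]. Qed.

Lemma rsum_mult_r {A} (f : A -> R) l k : rsum (fun a => f a * k) l = rsum f l * k.
Proof. unfold rsum; induction l; simpl; [lra | rewrite IHl; lra]. Qed.

Lemma rsum_ge_term {A} (f : A -> R) l a :
  In a l -> (forall x, In x l -> 0 <= f x) -> f a <= rsum f l.
Proof.
  unfold rsum; induction l as [|y l IH]; simpl; intros Hin H; [contradiction|].
  assert (Hl : 0 <= fold_right Rplus 0 (map f l)) by (apply (rsum_nonneg f l); auto).
  destruct Hin as [-> | Hin]; [specialize (H a (or_introl eq_refl)); lra|].
  specialize (IH Hin (fun x h => H x (or_intror h))); specialize (H y (or_introl eq_refl)); lra.
Qed.

Lemma rsum_single {A} (f : A -> R) l a :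
  NoDup l -> In a l -> (forall x, In x l -> x <> a -> f x = 0) -> rsum f l = f a.
Proof.
  induction l as [|y l IH]; intros Hnd Hin H; [contradiction|].
  unfold rsum; simpl; fold (rsum f l).
  apply NoDup_cons_iff in Hnd as [Hy Hnd].
  destruct Hin as [-> | Hin].
  - rewrite (rsum_const f l 0); [rewrite Rmult_0_r; lra|].
    intros x Hx; apply H; [now right | intros ->; contradiction].
  - rewrite IH, (H y (or_introl eq_refl)); [lra | intros ->; contradiction | auto..].
    intros x Hx; apply H; now right.
Qed.

Lemma rsum_seq_trunc (f : nat -> R) k n :
  (k <= n)%nat -> (forall i, (k <= i)%nat -> f i = 0) -> rsum f (seq 0 n) = rsum f (seq 0 k).
Proof.
  intros Hkn H; replace n with (k + (n - k))%nat by lia.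
  rewrite seq_app, rsum_app, (rsum_const f (seq (0 + k) (n - k)) 0); [lra|].
  intros i Hi; apply in_seq in Hi; apply H; lia.
Qed.

Lemma rsum_seq_three_blocks (F : nat -> R) n t g x v :
  (t < n)%nat -> (forall k, (k < t)%nat -> F k = g) -> F t = x ->
  (forall k, (t < k < n)%nat -> F k = v) ->
  rsum F (seq 0 n) = INR t * g + x + INR (n - 1 - t) * v.
Proof.
  intros Htn Hlo Ht Hhi; replace n with (t + S (n - 1 - t))%nat at 1 by lia.
  rewrite seq_app, rsum_app; simpl (seq (0 + t) _); unfold rsum at 2; simpl.
  fold (rsum F (seq (S t) (n - 1 - t))).
  rewrite (rsum_const F (seq 0 t) g), (rsum_const F (seq (S t) (n - 1 - t)) v), !length_seq, Ht;
    [lra | intros k Hk; apply in_seq in Hk; apply Hhi; lia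
         | intros k Hk; apply in_seq in Hk; apply Hlo; lia].
Qed.

Lemma rsum_seq_shift (f : nat -> R) a n :
  rsum f (seq a n) = rsum (fun j => f (a + j)%nat) (seq 0 n).
Proof.
  revert a; induction n as [|n IH]; intros a; [reflexivity|].
  change (f a + rsum f (seq (S a) n) = f (a + 0)%nat + rsum (fun j => f (a + j)%nat) (seq 1 n)).
  rewrite IH, <- seq_shift, rsum_map, Nat.add_0_r.
  f_equal; apply rsum_ext; intros j _; f_equal; lia.
Qed.

Lemma IZR_fold_sum {A} (f : A -> Z) l :
  IZR (fold_right Z.add 0%Z (map f l)) = rsum (fun a => IZR (f a)) l.
Proof. unfold rsum; induction l; simpl; auto; rewrite plus_IZR, IHl; reflexivity. Qed.

Lemma avg_cons f x xs : avg f (x :: xs) = rsum f (x :: xs) / INR (length (x :: xs)).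
Proof. reflexivity. Qed.

Lemma avg_le f g xs : (forall a, In a xs -> f a <= g a) -> avg f xs <= avg g xs.
Proof.
  intros H; destruct xs as [|x xs]; [simpl; lra|]; rewrite !avg_cons.
  apply Rmult_le_compat_r; [left; apply Rinv_0_lt_compat, lt_0_INR; simpl; lia|].
  now apply rsum_le.
Qed.

Lemma avg_nonneg f xs : (forall a, In a xs -> 0 <= f a) -> 0 <= avg f xs.
Proof.
  intros H; destruct xs as [|x xs]; [simpl; lra|]; rewrite avg_cons.
  apply Rmult_le_pos; [now apply rsum_nonneg | left; apply Rinv_0_lt_compat, lt_0_INR; simpl; lia].
Qed.

Lemma avg_singleton f x : avg f [x] = f x.
Proof. simpl; lra. Qed.

Lemma avg_map_seq f (h : nat -> state) n :
  (0 < n)%nat -> avg f (map h (seq 0 n)) = rsum (fun k => f (h k)) (seq 0 n) / INR n.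
Proof.
  intros Hn; destruct n as [|n]; [lia|]; simpl map.
  rewrite avg_cons, <- map_cons, rsum_map, length_map; simpl length; rewrite length_seq; reflexivity.
Qed.

(* [r n] is a success probability within [n] steps, [q] and [f] the probabilities that one outer
   iteration succeeds or restarts, and [K] bounds the number of steps it takes. *)
Lemma Un_cv_affine_renewal (r : nat -> R) (q f : R) (K : nat) :
  0 <= q -> 0 <= f < 1 -> r 0%nat = 0 ->
  (forall n, r n <= r (S n)) ->
  (forall n v, (forall m, (m <= n)%nat -> r m <= v) -> r (S n) <= q + f * v) ->
  (forall n, q + f * r n <= r (S (K + n))) ->
  Un_cv r (q / (1 - f)).
Proof.
  intros Hq Hf H0 Hmono Hup Hlow.
  set (L := q / (1 - f)).
  assert (HL : q + f * L = L) by (unfold L; field; lra).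
  assert (HL0 : 0 <= L) by (unfold L; apply Rmult_le_pos; [lra | left; apply Rinv_0_lt_compat; lra]).
  assert (Hbound : forall n m, (m <= n)%nat -> r m <= L).
  { induction n as [|n IH]; intros m Hm.
    - replace m with 0%nat by lia; lra.
    - destruct (Nat.eq_dec m (S n)) as [->|]; [|apply IH; lia].
      pose proof (Hup n L IH); pose proof (Rmult_le_compat_l f _ _ (proj1 Hf) (IH n (le_n _))); lra. }
  assert (Hmono_le : forall n m, (n <= m)%nat -> r n <= r m).
  { intros n m; induction 1; [lra|]; pose proof (Hmono m); lra. }
  assert (Hgap : forall j, L - r (j * S K)%nat <= f ^ j * L).
  { induction j as [|j IH]; [simpl; rewrite H0; lra|].
    replace (S j * S K)%nat with (S (K + j * S K)) by lia.
    pose proof (Hlow (j * S K)%nat); pose proof (Rmult_le_compat_l f _ _ (proj1 Hf) IH).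
    simpl pow; nra. }
  intros eps Heps.
  destruct (pow_lt_1_zero f ltac:(rewrite Rabs_right; lra) (eps / (L + 1)))
    as [N HN]; [apply Rdiv_lt_0_compat; lra|].
  exists (N * S K)%nat; intros n Hn; unfold Rdist.
  rewrite Rabs_left1 by (pose proof (Hbound n n (le_n _)); lra).
  pose proof (HN N (le_n _)) as HfN; rewrite Rabs_right in HfN by (apply Rle_ge, pow_le; lra).
  pose proof (Hgap N); pose proof (Hmono_le _ _ Hn).
  assert (f ^ N * L <= eps / (L + 1) * L) by (apply Rmult_le_compat_r; lra).
  assert (eps / (L + 1) * L < eps).
  { apply (Rmult_lt_reg_r (L + 1)); [lra|]; field_simplify; nra. }
  lra.
Qed.

Definition frac_pow2 (s e : Z) : R := IZR s * powerRZ 2 e - IZR (floor_pow2 s e).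

Lemma powerRZ_2_IZR e : (0 <= e)%Z -> powerRZ 2 e = IZR (2 ^ e).
Proof. intros He; rewrite <- (Z2Nat.id e He), <- pow_powerRZ, pow_IZR; reflexivity. Qed.

Lemma floor_pow2_nonneg s e : (0 <= s)%Z -> (0 <= floor_pow2 s e)%Z.
Proof.
  intros Hs; unfold floor_pow2; destruct (Z.leb_spec 0 e).
  - apply Z.mul_nonneg_nonneg; [lia | apply Z.pow_nonneg; lia].
  - apply Z.div_pos; [lia | apply Z.pow_pos_nonneg; lia].
Qed.

Lemma floor_pow2_div s e k : (0 <= k)%Z -> (floor_pow2 s (e + k) / 2 ^ k)%Z = floor_pow2 s e.
Proof.
  intros Hk; unfold floor_pow2.
  destruct (Z.leb_spec 0 e); destruct (Z.leb_spec 0 (e + k)); try lia.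
  - rewrite Z.pow_add_r, Z.mul_assoc, Z.div_mul by (try apply Z.pow_nonzero; lia); reflexivity.
  - replace (2 ^ k)%Z with (2 ^ (e + k) * 2 ^ (- e))%Z
      by (rewrite <- Z.pow_add_r by lia; f_equal; lia).
    rewrite Z.mul_comm; apply Z.div_mul_cancel_l; apply Z.pow_nonzero; lia.
  - rewrite Z.div_div, <- Z.pow_add_r by (try apply Z.pow_pos_nonneg; lia).
    do 2 f_equal; lia.
Qed.

Lemma frac_pow2_shift s e k : (0 <= k)%Z ->
  frac_pow2 s e = (IZR (floor_pow2 s (e + k) mod 2 ^ k) + frac_pow2 s (e + k)) / IZR (2 ^ k).
Proof.
  intros Hk; unfold frac_pow2.
  assert (Hpos : (0 < 2 ^ k)%Z) by (apply Z.pow_pos_nonneg; lia).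
  pose proof (Z.div_mod (floor_pow2 s (e + k)) (2 ^ k) ltac:(lia)) as Hdm.
  rewrite floor_pow2_div in Hdm by lia.
  set (t := (floor_pow2 s (e + k) mod 2 ^ k)%Z) in *.
  rewrite Hdm, plus_IZR, mult_IZR, powerRZ_add, (powerRZ_2_IZR k) by (lra || lia).
  assert (0 < IZR (2 ^ k)) by (apply IZR_lt; lia).
  field; lra.
Qed.

Lemma frac_pow2_nonneg_exp s e : (0 <= e)%Z -> frac_pow2 s e = 0.
Proof.
  intros He; unfold frac_pow2, floor_pow2; destruct (Z.leb_spec 0 e); [|lia].
  rewrite mult_IZR, powerRZ_2_IZR by lia; lra.
Qed.

Lemma frac_pow2_lt_1 s e : (0 <= s)%Z -> frac_pow2 s e < 1.
Proof.
  intros Hs; destruct (Z.leb_spec 0 e); [rewrite frac_pow2_nonneg_exp by lia; lra|].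
  unfold frac_pow2, floor_pow2; destruct (Z.leb_spec 0 e); [lia|].
  set (p := (2 ^ (- e))%Z).
  assert (Hp : (0 < p)%Z) by (apply Z.pow_pos_nonneg; lia).
  assert (HpR : 0 < IZR p) by (apply IZR_lt; lia).
  replace (powerRZ 2 e) with (/ IZR p)
    by (unfold p; rewrite <- powerRZ_2_IZR, powerRZ_neg', Rinv_inv by lia; reflexivity).
  pose proof (Z.div_mod s p ltac:(lia)) as Hdm; pose proof (Z.mod_pos_bound s p Hp).
  assert (IZR (s mod p) < IZR p) by (apply IZR_lt; lia).
  rewrite Hdm at 1; rewrite plus_IZR, mult_IZR.
  apply (Rmult_lt_reg_r (IZR p)); auto; field_simplify; lra.
Qed.

Lemma in_levels_index c i : in_levels c (lo c + Z.of_nat i) = (i <? Nlev c)%nat.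
Proof.
  unfold in_levels; destruct (Nat.ltb_spec i (Nlev c)).
  - apply andb_true_intro; split; [apply Z.leb_le | apply Z.ltb_lt]; lia.
  - rewrite (proj2 (Z.ltb_ge _ _)) by lia; destruct (_ <=? _)%Z; reflexivity.
Qed.

Lemma SS_out c l : in_levels c l = false -> SS c l = 0%Z.
Proof. intros H; unfold SS; rewrite H; reflexivity. Qed.

Lemma W_zero c l : SS c l = 0%Z -> W c l = 0.
Proof. intros H; unfold W; rewrite H; lra. Qed.

Lemma SS_nonneg b c l : normalized b c -> (0 <= SS c l)%Z.
Proof.
  intros Hn; unfold SS; destruct (in_levels c l); [|lia].
  destruct (Nat.lt_ge_cases (Z.to_nat (l - lo c)) (length (lv c))) as [Hi|Hi];
    [|rewrite nth_overflow by lia; simpl; lia].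
  unfold normalized in Hn; rewrite Forall_forall in Hn.
  specialize (Hn _ (nth_In _ nil Hi)); induction Hn; simpl; [lia|].
  pose proof (Z.pow_nonneg 2 (Z.of_nat b - 1)); lia.
Qed.

Lemma W_nonneg b c l : normalized b c -> 0 <= W c l.
Proof.
  intros Hn; unfold W; apply Rmult_le_pos;
    [apply IZR_le, (SS_nonneg b), Hn | left; apply powerRZ_lt; lra].
Qed.

Lemma Al_nonneg b G c l : normalized b c -> (0 <= Al G c l)%Z.
Proof.
  intros Hn; unfold Al; destruct (Z.ltb_spec 0 (SS c l)); [|lia].
  pose proof (floor_pow2_nonneg (SS c l) (l + G) ltac:(lia)); lia.
Qed.

Lemma SS_zero_of_Al_zero b G c l : normalized b c -> Al G c l = 0%Z -> SS c l = 0%Z.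
Proof.
  intros Hn H; pose proof (SS_nonneg b c l Hn); unfold Al in H.
  destruct (Z.ltb_spec 0 (SS c l)); [|lia].
  pose proof (floor_pow2_nonneg (SS c l) (l + G) ltac:(lia)); lia.
Qed.

Lemma IZR_Al G c l : (0 < SS c l)%Z ->
  IZR (Al G c l) = W c l * powerRZ 2 G + (1 - frac_pow2 (SS c l) (l + G)).
Proof.
  intros Hs; unfold Al, W, frac_pow2; destruct (Z.ltb_spec 0 (SS c l)); [|lia].
  rewrite plus_IZR, powerRZ_add by lra; lra.
Qed.

Lemma weight_le_Al b G c l : normalized b c -> W c l * powerRZ 2 G <= IZR (Al G c l).
Proof.
  intros Hn; pose proof (SS_nonneg b c l Hn).
  destruct (Z.ltb_spec 0 (SS c l)).
  - rewrite IZR_Al by lia; pose proof (frac_pow2_lt_1 (SS c l) (l + G) ltac:(lia)); lra.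
  - unfold Al, W; replace (SS c l) with 0%Z by lia; simpl; lra.
Qed.

Lemma exists_nonempty_level b c : (1 <= b)%nat -> normalized b c -> (1 <= zcount c)%nat ->
  exists i, (i < Nlev c)%nat /\ (0 < SS c (lo c + Z.of_nat i))%Z.
Proof.
  intros Hb Hn Hz.
  assert (Hpos : Forall (Forall (fun s => 0 < s)%Z) (lv c)).
  { pose proof (Z.pow_pos_nonneg 2 (Z.of_nat b - 1) ltac:(lia) ltac:(lia)).
    eapply Forall_impl; [|exact Hn]; intros a; apply Forall_impl; lia. }
  assert (Hex : exists i, (i < length (lv c))%nat /\ (0 < fold_right Z.add 0 (nth i (lv c) nil))%Z).
  { unfold zcount in Hz; induction Hpos as [|a L Ha HL IH]; simpl in *; [lia|].
    destruct Ha as [|s a Hs Ha].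
    - destruct (IH Hz) as [i Hi]; exists (S i); simpl; split; [lia | apply Hi].
    - exists 0%nat; split; [lia|]; simpl.
      enough (0 <= fold_right Z.add 0 a)%Z by lia.
      clear -Ha; induction Ha; simpl; lia. }
  destruct Hex as [i [Hi Hs]]; exists i; split; [exact Hi|].
  unfold SS; rewrite in_levels_index; unfold Nlev; destruct (Nat.ltb_spec i (length (lv c))); [|lia].
  replace (Z.to_nat (lo c + Z.of_nat i - lo c)) with i by lia; exact Hs.
Qed.

Definition level_sum (c : config) (f : Z -> R) : R :=
  rsum (fun i => f (lo c + Z.of_nat i)%Z) (seq 0 (Nlev c)).

Lemma sumW_level_sum c : sumW c = level_sum c (W c).
Proof. reflexivity. Qed.

Lemma level_sum_point c f l : (in_levels c l = false -> f l = 0) ->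
  level_sum c (fun l' => f l' * (if (l' =? l)%Z then 1 else 0)) = f l.
Proof.
  intros Hout; unfold level_sum; destruct (in_levels c l) eqn:Hin.
  - assert (Hl : l = (lo c + Z.of_nat (Z.to_nat (l - lo c)))%Z)
      by (unfold in_levels in Hin; apply andb_prop in Hin as [H1 _]; apply Z.leb_le in H1; lia).
    assert (Hi : (Z.to_nat (l - lo c) < Nlev c)%nat)
      by (rewrite Hl, in_levels_index in Hin; now apply Nat.ltb_lt).
    rewrite (rsum_single _ _ (Z.to_nat (l - lo c))), <- Hl, Z.eqb_refl; [lra | apply seq_NoDup | apply in_seq; lia|].
    intros i _ Hne; destruct (Z.eqb_spec (lo c + Z.of_nat i) l); [lia | lra].
  - rewrite Hout by reflexivity; rewrite (rsum_const _ _ 0); [lra|].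
    intros i Hi; apply in_seq in Hi; destruct (Z.eqb_spec (lo c + Z.of_nat i) l) as [<-|]; [|lra].
    rewrite in_levels_index in Hin; apply Nat.ltb_ge in Hin; lia.
Qed.

Definition top_index (c : config) : nat :=
  last (filter (fun i => 0 <? SS c (lo c + Z.of_nat i))%Z (seq 0 (Nlev c))) 0%nat.

Lemma le_last_filter_seq (p : nat -> bool) n i :
  (i < n)%nat -> p i = true -> (i <= last (filter p (seq 0 n)) 0)%nat.
Proof.
  induction n as [|n IH]; intros Hi Hp; [lia|].
  rewrite seq_S, filter_app; simpl; destruct (p n) eqn:Hpn.
  - rewrite last_last; lia.
  - rewrite app_nil_r; apply IH; [|exact Hp].
    destruct (Nat.eq_dec i n) as [->|]; [congruence | lia].
Qed.

Lemma Al_above_top G c i : (Nat.min (S (top_index c)) (Nlev c) <= i)%nat ->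
  Al G c (lo c + Z.of_nat i) = 0%Z.
Proof.
  intros Hi; unfold Al; destruct (Z.ltb_spec 0 (SS c (lo c + Z.of_nat i))) as [Hs|]; [|reflexivity].
  destruct (Nat.lt_ge_cases i (Nlev c)).
  - pose proof (le_last_filter_seq (fun i => 0 <? SS c (lo c + Z.of_nat i))%Z (Nlev c) i)
      as Htop; cbv beta in Htop; rewrite (proj2 (Z.ltb_lt _ _) Hs) in Htop.
    specialize (Htop ltac:(lia) eq_refl); unfold top_index in Hi; lia.
  - rewrite SS_out in Hs; [lia|]; rewrite in_levels_index; apply Nat.ltb_ge; lia.
Qed.

Section Algorithm.

Variables (b : nat) (G : Z) (c : config) (goal : state -> bool).

(* Success probability within [n] steps when the run is stopped at its next restart, which is
   credited with [v]. *)
Fixpoint stopped_value (n : nat) (v : R) (s : state) : R :=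
  match s with
  | Done _ => if goal s then 1 else 0
  | Outer => v
  | _ => match n with
         | O => 0
         | S n' => avg (stopped_value n' v) (step b G c s)
         end
  end.

Lemma reach_nonneg n s : 0 <= reach b G c goal n s.
Proof.
  revert s; induction n; intros s; simpl; destruct (is_done s); try destruct (goal s); try lra.
  all: now apply avg_nonneg.
Qed.

Lemma reach_le_S n s : reach b G c goal n s <= reach b G c goal (S n) s.
Proof.
  revert s; induction n as [|n IH]; intros s; simpl reach; destruct (is_done s); try lra.
  - apply avg_nonneg; intros a _; exact (reach_nonneg 0 a).
  - now apply avg_le.
Qed.

Lemma reach_le_mono n m s : (n <= m)%nat -> reach b G c goal n s <= reach b G c goal m s.
Proof. induction 1; [lra|]; pose proof (reach_le_S m s); lra. Qed.

Lemma stopped_value_nonneg n v s : 0 <= v -> 0 <= stopped_value n v s.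
Proof.
  revert s; induction n; intros s Hv; destruct s; simpl; try lra; try (destruct (goal _); lra).
  all: apply avg_nonneg; auto.
Qed.

Lemma stopped_value_le_S n v s : 0 <= v -> stopped_value n v s <= stopped_value (S n) v s.
Proof.
  revert s; induction n as [|n IH]; intros s Hv; destruct s; cbn [stopped_value]; try lra.
  all: try (apply avg_nonneg; intros a _; exact (stopped_value_nonneg 0 v a Hv)).
  all: apply avg_le; auto.
Qed.

Lemma stopped_value_le_mono n m v s :
  0 <= v -> (n <= m)%nat -> stopped_value n v s <= stopped_value m v s.
Proof. intros Hv; induction 1; [lra|]; pose proof (stopped_value_le_S m v s Hv); lra. Qed.

Lemma stopped_value_le_reach k n s :
  stopped_value k (reach b G c goal n Outer) s <= reach b G c goal (k + n) s.
Proof.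
  revert s; induction k as [|k IH]; intros s; destruct s; simpl plus.
  all: try (simpl; lra).
  all: try (destruct n; simpl; lra).
  all: try (apply reach_le_mono; lia).
  all: try apply reach_nonneg.
  all: apply avg_le; auto.
Qed.

Lemma reach_le_stopped_value n s v :
  (forall m, (m <= n)%nat -> reach b G c goal m Outer <= v) ->
  reach b G c goal n s <= stopped_value n v s.
Proof.
  revert s; induction n as [|n IH]; intros s H; destruct s; try (simpl; lra).
  all: try (apply H; lia).
  all: apply avg_le; intros; apply IH; intros; apply H; lia.
Qed.

Hypothesis (Hb : (1 <= b)%nat) (Hn : normalized b c).

Definition goal_value (l : Z) : R := if goal (Done l) then 1 else 0.

Lemma stopped_value_refine_step n v l m :
  let e := (l + G + m * Z.of_nat b)%Z in
  let t := (floor_pow2 (SS c l) e mod 2 ^ Z.of_nat b)%Z in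
  stopped_value (S n) v (Refine l m) =
    (IZR t * goal_value l
     + (if (0 <=? e)%Z then v else stopped_value n v (Refine l (m + 1)))
     + IZR (2 ^ Z.of_nat b - 1 - t) * v) / IZR (2 ^ Z.of_nat b).
Proof.
  intros e t.
  assert (HB : (0 < 2 ^ Z.of_nat b)%Z) by (apply Z.pow_pos_nonneg; lia).
  assert (Ht : (0 <= t < 2 ^ Z.of_nat b)%Z) by (apply Z.mod_pos_bound; lia).
  cbn [stopped_value step]; fold e t.
  rewrite avg_map_seq by lia.
  rewrite (rsum_seq_three_blocks _ _ (Z.to_nat t) (goal_value l)
             (if (0 <=? e)%Z then v else stopped_value n v (Refine l (m + 1))) v).
  - rewrite !INR_IZR_INZ, Nat2Z.inj_sub, Nat2Z.inj_sub, !Z2Nat.id by lia; reflexivity.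
  - lia.
  - intros k Hk; destruct (Z.ltb_spec (Z.of_nat k) t); [now destruct n | lia].
  - rewrite Z2Nat.id by lia; destruct (Z.ltb_spec t t); [lia|]; simpl.
    destruct (0 <=? e)%Z; [now destruct n | reflexivity].
  - intros k Hk; destruct (Z.ltb_spec (Z.of_nat k) t); [lia|].
    destruct (Z.ltb_spec t (Z.of_nat k)); [now destruct n | lia].
Qed.

Lemma stopped_value_refine_frac n v l m :
  let e := (l + G + m * Z.of_nat b)%Z in
  let phi k := frac_pow2 (SS c l) k in
  ((0 <= e)%Z \/
   stopped_value n v (Refine l (m + 1)) = phi e * goal_value l + (1 - phi e) * v) ->
  stopped_value (S n) v (Refine l m)
    = phi (e - Z.of_nat b)%Z * goal_value l + (1 - phi (e - Z.of_nat b)%Z) * v.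
Proof.
  intros e phi Hnext.
  assert (HB : 0 < IZR (2 ^ Z.of_nat b)) by (apply IZR_lt, Z.pow_pos_nonneg; lia).
  rewrite stopped_value_refine_step; fold e; unfold phi in *.
  rewrite (frac_pow2_shift _ (e - Z.of_nat b) (Z.of_nat b)) by lia.
  replace (e - Z.of_nat b + Z.of_nat b)%Z with e by lia.
  rewrite !minus_IZR; destruct (Z.leb_spec 0 e).
  - rewrite frac_pow2_nonneg_exp by lia; field; lra.
  - destruct Hnext as [He | ->]; [lia|]; field; lra.
Qed.

(* Each refinement step raises the exponent by [b]; after [d] steps it is nonnegative. *)
Lemma stopped_value_refine d n v l m :
  (- (l + G + m * Z.of_nat b) <= Z.of_nat d * Z.of_nat b)%Z -> (d < n)%nat ->
  stopped_value n v (Refine l m) =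
    frac_pow2 (SS c l) (l + G + (m - 1) * Z.of_nat b) * goal_value l
    + (1 - frac_pow2 (SS c l) (l + G + (m - 1) * Z.of_nat b)) * v.
Proof.
  revert n m; induction d as [|d IH]; intros n m He Hdn; destruct n as [|n]; try lia;
    replace (l + G + (m - 1) * Z.of_nat b)%Z with (l + G + m * Z.of_nat b - Z.of_nat b)%Z by lia;
    apply stopped_value_refine_frac.
  - left; lia.
  - destruct (Z.leb_spec 0 (l + G + m * Z.of_nat b)); [now left | right].
    rewrite (IH n (m + 1)%Z) by lia.
    replace (l + G + (m + 1 - 1) * Z.of_nat b)%Z with (l + G + m * Z.of_nat b)%Z by lia; reflexivity.
Qed.

Definition refine_depth : nat := Z.to_nat (Z.abs (lo c + G)).

Definition level_payoff (v : R) (l : Z) : R :=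
  W c l * powerRZ 2 G * goal_value l + (IZR (Al G c l) - W c l * powerRZ 2 G) * v.

Definition A_prefix (k : nat) : Z :=
  fold_right Z.add 0%Z (map (fun i => Al G c (lo c + Z.of_nat i)) (seq 0 k)).

Lemma stopped_value_scan n v x l : (lo c <= l)%Z ->
  stopped_value (S n) v (Scan x l) =
  if (x <? Al G c l)%Z then goal_value l
  else if (x =? Al G c l)%Z then stopped_value n v (Refine l 1)
  else stopped_value n v (Scan (x - Al G c l) (l - 1)).
Proof.
  intros Hl; cbn [stopped_value step].
  destruct (Z.ltb_spec l (lo c)); [lia|].
  destruct (x <? Al G c l)%Z; [rewrite avg_singleton; now destruct n|].
  destruct (x =? Al G c l)%Z; apply avg_singleton.
Qed.

Lemma rsum_scan_level n v l : (lo c <= l)%Z -> (refine_depth < n)%nat ->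
  rsum (fun j => stopped_value (S n) v (Scan (Z.of_nat j + 1) l))
       (seq 0 (Z.to_nat (Al G c l)))
  = level_payoff v l.
Proof.
  intros Hl Hdepth; unfold level_payoff.
  pose proof (SS_nonneg b c l Hn) as Hs.
  destruct (Z.ltb_spec 0 (SS c l)) as [Hpos|].
  2: { unfold Al, W; replace (SS c l) with 0%Z by lia; simpl; unfold rsum; simpl; lra. }
  rewrite (IZR_Al G c l Hpos).
  set (P := floor_pow2 (SS c l) (l + G)).
  assert (HP : (0 <= P)%Z) by (apply floor_pow2_nonneg; lia).
  assert (HAl : Al G c l = (P + 1)%Z) by (unfold Al; destruct (Z.ltb_spec 0 (SS c l)); [reflexivity | lia]).
  rewrite HAl, Z2Nat.inj_add, Nat.add_1_r, seq_S, rsum_app by lia.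
  rewrite (rsum_const _ _ (goal_value l)).
  2: { intros j Hj; apply in_seq in Hj.
       rewrite stopped_value_scan, HAl by lia; destruct (Z.ltb_spec (Z.of_nat j + 1) (P + 1)); [reflexivity | lia]. }
  cbn [rsum map fold_right Nat.add].
  rewrite stopped_value_scan, HAl by lia.
  destruct (Z.ltb_spec (Z.of_nat (Z.to_nat P) + 1) (P + 1)); [lia|].
  destruct (Z.eqb_spec (Z.of_nat (Z.to_nat P) + 1) (P + 1)); [|lia].
  assert (Hd : Z.of_nat refine_depth = Z.abs (lo c + G)) by (unfold refine_depth; lia).
  rewrite (stopped_value_refine refine_depth) by nia.
  replace (l + G + (1 - 1) * Z.of_nat b)%Z with (l + G)%Z by lia.
  rewrite length_seq, INR_IZR_INZ, Z2Nat.id by lia.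
  unfold W, frac_pow2; fold P; rewrite powerRZ_add by lra; ring.
Qed.

Lemma IZR_A_prefix k :
  IZR (A_prefix k) = rsum (fun i => IZR (Al G c (lo c + Z.of_nat i))) (seq 0 k).
Proof. apply IZR_fold_sum. Qed.

Lemma A_prefix_S k : A_prefix (S k) = (A_prefix k + Al G c (lo c + Z.of_nat k))%Z.
Proof.
  apply eq_IZR; rewrite plus_IZR, !IZR_A_prefix, seq_S, rsum_app; unfold rsum at 2; simpl; lra.
Qed.

Lemma A_prefix_nonneg k : (0 <= A_prefix k)%Z.
Proof.
  apply le_IZR; rewrite IZR_A_prefix; apply rsum_nonneg; intros i _.
  apply IZR_le, (Al_nonneg b), Hn.
Qed.

Lemma rsum_scan_levels k n v : (k + refine_depth < n)%nat ->
  rsum (fun j => stopped_value n v (Scan (Z.of_nat j + 1) (lo c + Z.of_nat k - 1)))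
       (seq 0 (Z.to_nat (A_prefix k)))
  = rsum (fun i => level_payoff v (lo c + Z.of_nat i)) (seq 0 k).
Proof.
  revert n; induction k as [|k IH]; intros n Hkn; [reflexivity|].
  destruct n as [|n]; [lia|].
  set (a := Al G c (lo c + Z.of_nat k)).
  assert (Ha : (0 <= a)%Z) by apply (Al_nonneg b), Hn.
  pose proof (A_prefix_nonneg k).
  rewrite A_prefix_S, Z2Nat.inj_add, Nat.add_comm, seq_app, rsum_app by lia; fold a.
  replace (lo c + Z.of_nat (S k) - 1)%Z with (lo c + Z.of_nat k)%Z by lia.
  rewrite rsum_scan_level by lia.
  rewrite seq_S, rsum_app, <- (IH n) by lia.
  unfold rsum at 3; cbn [map fold_right Nat.add]; rewrite Rplus_0_r, Rplus_comm.
  f_equal; rewrite rsum_seq_shift; apply rsum_ext; intros j _.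
  rewrite stopped_value_scan by lia; fold a.
  rewrite Nat2Z.inj_add, Z2Nat.id by lia.
  destruct (Z.ltb_spec (a + Z.of_nat j + 1) a); [lia|].
  destruct (Z.eqb_spec (a + Z.of_nat j + 1) a); [lia|].
  do 2 f_equal; lia.
Qed.

Lemma level_payoff_Al_zero v l : Al G c l = 0%Z -> level_payoff v l = 0.
Proof.
  intros H; unfold level_payoff; rewrite H, (W_zero c l (SS_zero_of_Al_zero b G c l Hn H)); lra.
Qed.

Lemma IZR_Atot : IZR (Atot G c) = level_sum c (fun l => IZR (Al G c l)).
Proof. apply IZR_fold_sum. Qed.

Lemma Atot_eq_A_prefix_top : Atot G c = A_prefix (S (top_index c)).
Proof.
  apply eq_IZR; rewrite IZR_Atot, IZR_A_prefix; unfold level_sum.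
  set (k := Nat.min (S (top_index c)) (Nlev c)).
  rewrite (rsum_seq_trunc _ k (Nlev c)), (rsum_seq_trunc _ k (S (top_index c))); try (unfold k; lia);
    reflexivity || (intros; rewrite Al_above_top by lia; reflexivity).
Qed.

Lemma stopped_value_outer v n : (1 <= Atot G c)%Z ->
  (S (top_index c) + refine_depth < n)%nat ->
  avg (stopped_value n v) (step b G c Outer)
  = level_sum c (level_payoff v) / IZR (Atot G c).
Proof.
  intros HA Hfuel; cbn [step]; rewrite avg_map_seq by lia.
  rewrite INR_IZR_INZ, Z2Nat.id by lia; f_equal.
  replace (top c) with (lo c + Z.of_nat (S (top_index c)) - 1)%Z by (unfold top, top_index; lia).
  rewrite Atot_eq_A_prefix_top, rsum_scan_levels by lia.
  unfold level_sum; set (k := Nat.min (S (top_index c)) (Nlev c)).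
  rewrite (rsum_seq_trunc _ k (Nlev c)), (rsum_seq_trunc _ k (S (top_index c))); try (unfold k; lia);
    reflexivity || (intros; apply level_payoff_Al_zero, Al_above_top; lia).
Qed.

Hypothesis Hz : (1 <= zcount c)%nat.

Lemma sumW_pos : 0 < sumW c.
Proof.
  destruct (exists_nonempty_level b c Hb Hn Hz) as [i [Hi Hs]].
  apply Rlt_le_trans with (W c (lo c + Z.of_nat i)).
  - unfold W; apply Rmult_lt_0_compat; [apply IZR_lt; lia | apply powerRZ_lt; lra].
  - apply (rsum_ge_term (fun i => W c (lo c + Z.of_nat i))); [apply in_seq; lia|].
    intros; apply (W_nonneg b), Hn.
Qed.

Lemma sumW_le_Atot : sumW c * powerRZ 2 G <= IZR (Atot G c).
Proof.
  rewrite IZR_Atot, sumW_level_sum; unfold level_sum.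
  rewrite <- rsum_mult_r; apply rsum_le; intros; apply (weight_le_Al b), Hn.
Qed.

Lemma Atot_pos : (1 <= Atot G c)%Z.
Proof.
  enough (0 < IZR (Atot G c)) by (apply lt_IZR in H; lia).
  pose proof sumW_pos; pose proof sumW_le_Atot.
  pose proof (powerRZ_lt 2 G ltac:(lra)); nra.
Qed.

Lemma level_sum_payoff v :
  level_sum c (level_payoff v)
  = level_sum c (fun l => W c l * goal_value l) * powerRZ 2 G
    + (IZR (Atot G c) - sumW c * powerRZ 2 G) * v.
Proof.
  rewrite IZR_Atot, sumW_level_sum; unfold level_sum, level_payoff.
  rewrite rsum_plus, rsum_mult_r, rsum_minus, rsum_mult_r; f_equal.
  rewrite <- rsum_mult_r; apply rsum_ext; intros; ring.
Qed.

Lemma reach_limit :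
  Un_cv (fun n => reach b G c goal n Outer)
        (level_sum c (fun l => W c l * goal_value l) / sumW c).
Proof.
  set (Q := level_sum c (fun l => W c l * goal_value l)).
  set (P := powerRZ 2 G); set (A := IZR (Atot G c)); set (T := S (S (top_index c) + refine_depth)).
  assert (HP : 0 < P) by (apply powerRZ_lt; lra).
  assert (HW : 0 < sumW c) by exact sumW_pos.
  assert (HWA : sumW c * P <= A) by exact sumW_le_Atot.
  assert (HA : 1 <= A) by (apply IZR_le, Atot_pos).
  assert (HQ : 0 <= Q).
  { apply rsum_nonneg; intros; unfold goal_value; destruct (goal _);
      pose proof (W_nonneg b c (lo c + Z.of_nat a) Hn); lra. }
  assert (Houter : forall v n, (T <= n)%nat ->
    avg (stopped_value n v) (step b G c Outer) = Q * P / A + (A - sumW c * P) / A * v).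
  { intros v n Hfuel; rewrite stopped_value_outer by (apply Atot_pos || lia).
    rewrite level_sum_payoff; fold Q P A; field; lra. }
  replace (Q / sumW c) with (Q * P / A / (1 - (A - sumW c * P) / A)) by (field; nra).
  apply (Un_cv_affine_renewal _ _ _ T).
  - apply Rmult_le_pos; [nra | left; apply Rinv_0_lt_compat; lra].
  - split; [apply Rmult_le_pos; [lra | left; apply Rinv_0_lt_compat; lra]|].
    apply (Rmult_lt_reg_r A); [lra|]; field_simplify; nra.
  - reflexivity.
  - intros n; apply reach_le_S.
  - intros n v Hv.
    assert (Hv0 : 0 <= v) by (pose proof (Hv 0%nat ltac:(lia)); simpl in *; lra).
    change (avg (reach b G c goal n) (step b G c Outer) <= Q * P / A + (A - sumW c * P) / A * v).
    rewrite <- (Houter v (n + T)%nat) by lia.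
    apply avg_le; intros s _; eapply Rle_trans;
      [apply reach_le_stopped_value, Hv | apply stopped_value_le_mono; [lra | lia]].
  - intros n; rewrite <- (Houter (reach b G c goal n Outer) T) by lia.
    apply avg_le; intros s _; apply stopped_value_le_reach.
Qed.

End Algorithm.

Theorem mainTheorem3 (b : nat) (G : Z) (c : config) :
  (2 <= b)%nat ->
  normalized b c ->
  (1 <= zcount c)%nat ->
  (Z.of_nat (zcount c) < 2 ^ Z.of_nat b)%Z ->
  Un_cv (fun n => reach b G c is_done n Outer) 1%R /\
  (forall l : Z,
      Un_cv (fun n => reach b G c (done_at l) n Outer) (W c l / sumW c)%R).
Proof.
  intros Hb Hn Hz _.
  assert (Hb1 : (1 <= b)%nat) by lia.
  split.
  - replace 1 with (level_sum c (fun l => W c l * goal_value is_done l) / sumW c).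
    + exact (reach_limit b G c is_done Hb1 Hn Hz).
    + pose proof (sumW_pos b c Hb1 Hn Hz).
      replace (level_sum c (fun l => W c l * goal_value is_done l)) with (sumW c);
        [field; lra | rewrite sumW_level_sum; apply rsum_ext; intros; unfold goal_value; simpl; ring].
  - intros l; rewrite <- (level_sum_point c (W c) l) by (intros; apply W_zero, SS_out; assumption).
    exact (reach_limit b G c (done_at l) Hb1 Hn Hz).
Qed.
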